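(* Suppose that $(L_1,<_1),\ldots,(L_n,<_n)$ are linear orders each with at least two elements, and let $<$ be the product order on $L_1\times\cdots\times L_n$. If $\prec_1,\ldots,\prec_n$ are linear orders on $L_1\times\cdots\times L_n$ which realize $<$ (i.e. $<\;=\;\prec_1\cap\cdots\cap\prec_n$), then there is a permutation $\sigma\in S_n$ such that for all $i\leq n$ and all $\mathbf{a},\mathbf{b}\in L_1\times\cdots\times L_n$, $a_i<_ib_i$ implies $\mathbf{a}\prec_{\sigma(i)}\mathbf{b}$.
   Context: The product order: $\mathbf{a}<\mathbf{b}$ iff $a_i\leq_i b_i$ for all $i$ and $\mathbf{a}\neq\mathbf{b}$. $S_n$ is the group of permutations of $\{1,\ldots,n\}$. *)

From mathcomp Require Import all_boot all_fingroup.
Set Implicit Arguments. Unset Strict Implicit. Unset Printing Implicit Defensive.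

Definition strict_linear_order (T : Type) (lt : T -> T -> Prop) : Prop :=
  (forall x, ~ lt x x) /\
  (forall x y z, lt x y -> lt y z -> lt x z) /\
  (forall x y, x <> y -> lt x y \/ lt y x).

Definition prodT (n : nat) (L : 'I_n -> Type) : Type := forall i : 'I_n, L i.

Definition prod_lt (n : nat) (L : 'I_n -> Type)
  (lt : forall i : 'I_n, L i -> L i -> Prop) (a b : prodT L) : Prop :=
  (forall i : 'I_n, lt i (a i) (b i) \/ a i = b i) /\ a <> b.

(* Call a pair x < y that is strict in every coordinate a box. For a coordinate i,
   the corner of a box that is high only at i and the corner that is low only at i
   are incomparable in the product order, so some realizer prec_k ranks the former
   above the latter. If the same k served coordinates i <> j of suitably nested
   boxes, these corners would form a cycle alternating prec_k and the product
   order. Hence on a single box the choice i |-> k is a permutation, and it does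
   not change when the i-th side of the box grows while the other sides shrink.
   Two such moves lead from a fixed box to one whose i-th side is [a_i, b_i],
   whose corner low only at i lies above a and whose corner high only at i lies
   below b; this gives a prec_(sigma i) b. *)
From Stdlib Require Import Classical ClassicalEpsilon.
From mathcomp Require Import all_boot all_fingroup.

Definition le_of {T : Type} (lt : T -> T -> Prop) (x y : T) : Prop := lt x y \/ x = y.

Definition lmin {T : Type} (lt : T -> T -> Prop) (x y : T) : T :=
  if excluded_middle_informative (lt x y) then x else y.

Definition lmax {T : Type} (lt : T -> T -> Prop) (x y : T) : T :=
  if excluded_middle_informative (lt x y) then y else x.

Section StrictLinearOrder.
Context {T : Type} {lt : T -> T -> Prop}.
Hypothesis lt_linear : strict_linear_order lt.

Lemma ltxx {x} : ~ lt x x.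
Proof. by case: lt_linear. Qed.

Lemma lt_trans {x y z} : lt x y -> lt y z -> lt x z.
Proof. by case: lt_linear => _ [trans _]; apply: trans. Qed.

Lemma lt_total {x y} : x <> y -> lt x y \/ lt y x.
Proof. by case: lt_linear => _ [_ total]; apply: total. Qed.

Lemma le_refl x : le_of lt x x.
Proof. by right. Qed.

Lemma ltW {x y} : lt x y -> le_of lt x y.
Proof. by left. Qed.

Lemma le_lt_trans {x y z} : le_of lt x y -> lt y z -> lt x z.
Proof. by case=> [xy|->] // yz; apply: lt_trans xy yz. Qed.

Lemma lt_le_trans {x y z} : lt x y -> le_of lt y z -> lt x z.
Proof. by move=> xy [yz|<-] //; apply: lt_trans xy yz. Qed.

Lemma le_lt_le_trans {x x' y y'} :
  le_of lt x' x -> lt x y -> le_of lt y y' -> lt x' y'.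
Proof. by move=> x'x xy yy'; apply: le_lt_trans x'x (lt_le_trans xy yy'). Qed.

Lemma le_trans {x y z} : le_of lt x y -> le_of lt y z -> le_of lt x z.
Proof. by case=> [xy|->] // yz; left; apply: lt_le_trans xy yz. Qed.

Lemma lt_nle {x y} : lt x y -> ~ le_of lt y x.
Proof. by move=> xy yx; exact: ltxx (le_lt_trans yx xy). Qed.

Lemma le_total x y : le_of lt x y \/ le_of lt y x.
Proof.
case: (classic (x = y)) => [->|/lt_total[]]; by [left; right | left; left | right; left].
Qed.

Lemma lmin_le_l x y : le_of lt (lmin lt x y) x.
Proof.
rewrite /lmin; case: (excluded_middle_informative (lt x y)) => [_|nxy] /=.
  exact: le_refl.
by case: (le_total y x) => // -[/nxy[]|->]; apply: le_refl.
Qed.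

Lemma lmin_le_r x y : le_of lt (lmin lt x y) y.
Proof.
by rewrite /lmin; case: (excluded_middle_informative (lt x y)) => [/ltW|_] //=; right.
Qed.

Lemma le_lmax_l x y : le_of lt x (lmax lt x y).
Proof.
by rewrite /lmax; case: (excluded_middle_informative (lt x y)) => [/ltW|_] //=; right.
Qed.

Lemma le_lmax_r x y : le_of lt y (lmax lt x y).
Proof.
rewrite /lmax; case: (excluded_middle_informative (lt x y)) => [_|nxy] /=.
  exact: le_refl.
by case: (le_total x y) => // -[/nxy[]|->]; apply: le_refl.
Qed.

End StrictLinearOrder.

Section Realizer.
Context {n : nat} {L : 'I_n -> Type} {lt : forall i : 'I_n, L i -> L i -> Prop}.
Hypothesis lt_linear : forall i : 'I_n, strict_linear_order (lt i).
Context {prec : 'I_n -> prodT L -> prodT L -> Prop}.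
Hypothesis prec_linear : forall k : 'I_n, strict_linear_order (prec k).
Hypothesis prec_realize :
  forall a b : prodT L, prod_lt lt a b <-> (forall k : 'I_n, prec k a b).

Definition prod_le (a b : prodT L) : Prop := forall m, le_of (lt m) (a m) (b m).

Definition is_box (x y : prodT L) : Prop := forall m, lt m (x m) (y m).

Definition corner (x y : prodT L) (i : 'I_n) : prodT L :=
  fun m => if m == i then y m else x m.

Definition corner_prec (k : 'I_n) (x y : prodT L) (i : 'I_n) : Prop :=
  prec k (corner y x i) (corner x y i).

Definition widens_at (i : 'I_n) (x y x' y' : prodT L) : Prop :=
  [/\ le_of (lt i) (x' i) (x i), le_of (lt i) (y i) (y' i)
    & forall m, m != i -> le_of (lt m) (x m) (x' m) /\ le_of (lt m) (y' m) (y m)].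

Lemma corner_at x y i : corner x y i i = y i.
Proof. by rewrite /corner eqxx. Qed.

Lemma corner_off x y i m : m != i -> corner x y i m = x m.
Proof. by rewrite /corner => /negbTE->. Qed.

Lemma prod_le_eq_or_prec k {a b} : prod_le a b -> a = b \/ prec k a b.
Proof.
move=> ab; case: (classic (a = b)) => [|neq]; [by left | right].
by apply: (proj1 (prec_realize a b)).
Qed.

Lemma prec_prod_le_trans {k a b c} : prec k a b -> prod_le b c -> prec k a c.
Proof.
move=> ab /(prod_le_eq_or_prec k) [<-|bc] //.
exact: (lt_trans (prec_linear k) ab bc).
Qed.

Lemma prod_le_prec_trans {k a b c} : prod_le a b -> prec k b c -> prec k a c.
Proof.
move=> /(prod_le_eq_or_prec k) [->|ab] bc //.
exact: (lt_trans (prec_linear k) ab bc).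
Qed.

Lemma corner_prec_exists {x y} i : is_box x y -> exists k, corner_prec k x y i.
Proof.
move=> xy; apply: NNPP => none.
have corners_neq : corner x y i <> corner y x i.
  move=> /(congr1 (fun p : prodT L => p i)); rewrite !corner_at => yx.
  by have := xy i; rewrite yx; exact: (ltxx (lt_linear i)).
have [/(_ i) + _] : prod_lt lt (corner x y i) (corner y x i).
  apply/prec_realize => k.
  case: (lt_total (prec_linear k) corners_neq) => // yx.
  by case: none; exists k.
by rewrite !corner_at; exact: (lt_nle (lt_linear i) (xy i)).
Qed.

Lemma widens_corner_prec_neq {k i j x y x' y'} :
  is_box x' y' -> widens_at i x y x' y' -> j != i ->
  corner_prec k x y i -> corner_prec k x' y' j -> False.
Proof.
move=> box' [xi yi others] ji prec_i prec_j.
have ij : i != j by rewrite eq_sym.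
have up : prod_le (corner x y i) (corner y' x' j).
  move=> m; case: (eqVneq m i) => [->|mi]; first by rewrite corner_at corner_off.
  case: (eqVneq m j) => [->|mj].
    by rewrite corner_off // corner_at; case: (others j ji).
  rewrite !corner_off //; have [xm _] := others m mi.
  exact: (le_trans (lt_linear m) xm (ltW (box' m))).
have down : prod_le (corner x' y' j) (corner y x i).
  move=> m; case: (eqVneq m i) => [->|mi]; first by rewrite corner_off // corner_at.
  case: (eqVneq m j) => [->|mj].
    by rewrite corner_at corner_off; case: (others j ji).
  rewrite !corner_off //; have [_ ym] := others m mi.
  exact: (le_trans (lt_linear m) (ltW (box' m)) ym).
apply: (ltxx (prec_linear k)); apply: (prec_prod_le_trans _ down).
exact: (lt_trans (prec_linear k) (prec_prod_le_trans prec_i up) prec_j).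
Qed.

Lemma widens_at_refl i x y : widens_at i x y x y.
Proof. by split=> [||m _]; rewrite /le_of; auto. Qed.

Lemma corner_perm_exists {x y} :
  is_box x y -> exists s : 'S_n, forall i, corner_prec (s i) x y i.
Proof.
move=> xy; have [f f_prec] := fin_all_exists (fun i => corner_prec_exists i xy).
have f_inj : injective f.
  move=> i j fij; apply/eqP; apply/negP => /negP ij.
  apply: (widens_corner_prec_neq xy (widens_at_refl j x y) ij (f_prec j)).
  by rewrite -fij.
by exists (perm f_inj) => i; rewrite permE.
Qed.

Lemma widens_corner_prec_perm {k i x y x' y'} {s : 'S_n} :
  is_box x' y' -> widens_at i x y x' y' ->
  (forall j, corner_prec (s j) x' y' j) -> corner_prec k x y i -> k = s i.
Proof.
move=> box' wid s_prec prec_i; rewrite -[k](permKV s).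
case: (eqVneq (s^-1 k)%g i) => [->|ji] //.
by case: (widens_corner_prec_neq box' wid ji prec_i); rewrite -{1}[k](permKV s).
Qed.

Lemma corner_perm_realizes {x0 y0} {s : 'S_n} {i a b} :
  is_box x0 y0 -> (forall j, corner_prec (s j) x0 y0 j) ->
  lt i (a i) (b i) -> prec (s i) a b.
Proof.
move=> box0 s_prec ab.
pose pmin (x y : prodT L) : prodT L := fun m => lmin (lt m) (x m) (y m).
pose pmax (x y : prodT L) : prodT L := fun m => lmax (lt m) (x m) (y m).
pose x1 := corner x0 (pmin x0 a) i; pose y1 := corner y0 (pmax y0 b) i.
pose x2 := corner (pmin x0 b) a i; pose y2 := corner (pmax y0 a) b i.
have box1 : is_box x1 y1.
  move=> m; rewrite /x1 /y1.
  case: (eqVneq m i) => [->|mi]; rewrite ?corner_at ?corner_off //.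
  exact: (le_lt_le_trans (lt_linear i) (lmin_le_l (lt_linear i) _ _) (box0 i)
                         (le_lmax_l _ _)).
have box2 : is_box x2 y2.
  move=> m; rewrite /x2 /y2.
  case: (eqVneq m i) => [->|mi]; rewrite ?corner_at ?corner_off //.
  exact: (le_lt_le_trans (lt_linear m) (lmin_le_l (lt_linear m) _ _) (box0 m)
                         (le_lmax_l _ _)).
have wid01 : widens_at i x0 y0 x1 y1.
  split; rewrite /x1 /y1 ?corner_at; [exact: lmin_le_l | exact: le_lmax_l |].
  by move=> m mi; rewrite !corner_off //; split; apply: le_refl.
have wid21 : widens_at i x2 y2 x1 y1.
  split; rewrite /x1 /y1 /x2 /y2 ?corner_at; [exact: lmin_le_r | exact: le_lmax_r |].
  by move=> m mi; rewrite !corner_off //; split; [exact: lmin_le_l | exact: le_lmax_l].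
have [s1 s1_prec] := corner_perm_exists box1.
have [s2 s2_prec] := corner_perm_exists box2.
have s1_s : s i = s1 i := widens_corner_prec_perm box1 wid01 s1_prec (s_prec i).
have s1_s2 : s2 i = s1 i := widens_corner_prec_perm box1 wid21 s1_prec (s2_prec i).
have := s2_prec i; rewrite s1_s2 -s1_s => prec2.
apply: (prod_le_prec_trans _ (prec_prod_le_trans prec2 _)) => m; rewrite /x2 /y2.
  case: (eqVneq m i) => [->|mi]; rewrite ?corner_at ?corner_off //; last exact: le_lmax_r.
  exact: le_refl.
case: (eqVneq m i) => [->|mi]; rewrite ?corner_at ?corner_off //; last exact: lmin_le_r.
exact: le_refl.
Qed.

End Realizer.

Theorem lemma6p3 (n : nat) (L : 'I_n -> Type)
  (lt : forall i : 'I_n, L i -> L i -> Prop)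
  (hlin : forall i : 'I_n, strict_linear_order (lt i))
  (htwo : forall i : 'I_n, exists x y : L i, x <> y)
  (prec : 'I_n -> prodT L -> prodT L -> Prop)
  (hprec : forall k : 'I_n, strict_linear_order (prec k))
  (hreal : forall a b : prodT L, prod_lt lt a b <-> (forall k : 'I_n, prec k a b)) :
  exists sigma : 'S_n, forall (i : 'I_n) (a b : prodT L),
    lt i (a i) (b i) -> prec (sigma i) a b.
Proof.
have [x0 [y0 box0]] : exists x0 y0 : prodT L, forall m, lt m (x0 m) (y0 m).
  have ordered m : exists p : L m * L m, lt m p.1 p.2.
    have [x [y /(lt_total (hlin m)) [xy|yx]]] := htwo m.
    - by exists (x, y).
    - by exists (y, x).
  have [p p_ordered] := fin_all_exists ordered.
  by exists (fun m => (p m).1), (fun m => (p m).2).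
have [s s_prec] := corner_perm_exists hlin hprec hreal box0.
exists s => i a b ab.
exact: (corner_perm_realizes hlin hprec hreal box0 s_prec ab).
Qed.
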